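(* Let $G$ be a graph containing a $2$-factor, and let $F$ be a $2$-factor of $G$ whose number of components is minimum among all $2$-factors of $G$. Let $x\in V(G)$ be such that there exists a $2$-factor $F'$ of $G-x$ with $\omega(F')<\omega(F)$ (such $x$ is called co-absorbable). Then $d_G(x)\le \alpha(G)-1$.
   Context: All graphs are finite, simple and undirected. A $2$-factor of a graph is a spanning subgraph in which every vertex has degree $2$ (equivalently, every component is a cycle). $\omega(H)$ denotes the number of connected components of $H$, $d_G(x)$ the degree of $x$ in $G$, and $\alpha(G)$ the independence number of $G$. *)

From mathcomp Require Import all_boot.
Set Implicit Arguments. Unset Strict Implicit. Unset Printing Implicit Defensive.

Definition simple_graph (T : finType) (e : rel T) : Prop :=
  symmetric e /\ irreflexive e.

Definition deg (T : finType) (e : rel T) (x : T) : nat := #|[set y | e x y]|.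

Definition restr (T : finType) (D : {set T}) (f : rel T) : rel T :=
  fun a b => [&& a \in D, b \in D & f a b].

Definition ncomp (T : finType) (D : {set T}) (f : rel T) : nat :=
  #|[set [set y in D | connect (restr D f) v y] | v in D]|.

Definition two_factor_on (T : finType) (e : rel T) (D : {set T}) (f : rel T) : Prop :=
  [/\ symmetric f,
      (forall a b, f a b -> [&& a \in D, b \in D & e a b]) &
      (forall v, v \in D -> deg f v = 2)].

Definition two_factor (T : finType) (e : rel T) (f : rel T) : Prop :=
  two_factor_on e [set: T] f.

Definition independent (T : finType) (e : rel T) (S : {set T}) : bool :=
  [forall x in S, forall y in S, ~~ e x y].

Definition alpha (T : finType) (e : rel T) : nat :=
  \max_(S : {set T} | independent e S) #|S|.

From mathcomp Require Import all_boot perm ring.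
Set Implicit Arguments. Unset Strict Implicit. Unset Printing Implicit Defensive.

(* Orient the cycles of the 2-factor F' of G - x by a successor map s.  If x
   were adjacent to both y and s y, inserting x between them would give a
   2-factor of G with at most ω(F') < ω(F) components; if s a and s b were
   adjacent for distinct neighbours a, b of x, replacing the arcs a -> s a and
   b -> s b by the edges x a, x b and (s a)(s b) would do the same.  Both
   contradict the minimality of F, so x together with the successors of its
   neighbours is an independent set of size d(x) + 1. *)

Section EdgeSwitch.
Variable T : finType.
Implicit Types (f g : rel T) (p q v w : T).

Definition edge p q : rel T := fun u v => (u == p) && (v == q) || (u == q) && (v == p).
Definition add_edge p q f : rel T := fun u v => f u v || edge p q u v.
Definition del_edge p q f : rel T := fun u v => f u v && ~~ edge p q u v.

Lemma edgeC p q : edge p q =2 edge q p.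
Proof. by move=> u v; rewrite /edge orbC. Qed.

Lemma edge_sym p q : symmetric (edge p q).
Proof. by move=> u v; rewrite /edge orbC andbC [(v == q) && _]andbC. Qed.

Lemma add_edge_sym p q f : symmetric f -> symmetric (add_edge p q f).
Proof. by move=> fsym u v; rewrite /add_edge fsym edge_sym. Qed.

Lemma del_edge_sym p q f : symmetric f -> symmetric (del_edge p q f).
Proof. by move=> fsym u v; rewrite /del_edge fsym edge_sym. Qed.

Lemma edge_subrel g p q : symmetric g -> g p q -> subrel (edge p q) g.
Proof.
by move=> gsym gpq u v; rewrite /edge => /orP[] /andP[/eqP-> /eqP->]; rewrite // gsym.
Qed.

Lemma add_edge_subrel g p q f :
  symmetric g -> g p q -> subrel f g -> subrel (add_edge p q f) g.
Proof. by move=> gsym gpq fg u v /orP[/fg // | /(edge_subrel gsym gpq)]. Qed.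

Lemma del_edge_subrel p q f : subrel (del_edge p q f) f.
Proof. by move=> u v /andP[]. Qed.

Lemma add_edge_supset p q f : subrel f (add_edge p q f).
Proof. by move=> u v fuv; rewrite /add_edge fuv. Qed.

Lemma edgeNr p q u v : v != p -> v != q -> ~~ edge p q u v.
Proof. by move=> vp vq; rewrite /edge (negbTE vp) (negbTE vq) !andbF. Qed.

Lemma edgeNl p q u v : u != p -> u != q -> ~~ edge p q u v.
Proof. by move=> up uq; rewrite edge_sym edgeNr. Qed.

Lemma add_edgeN p q f u v : ~~ f u v -> ~~ edge p q u v -> ~~ add_edge p q f u v.
Proof. by rewrite /add_edge negb_or => -> ->. Qed.

Lemma del_edgeN p q f u v : ~~ f u v -> ~~ del_edge p q f u v.
Proof. by apply: contra => /andP[]. Qed.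

Lemma deg_edge p q v : p != q -> deg (edge p q) v = (v == p) + (v == q).
Proof.
move=> pq; rewrite /deg.
have [->|vp] := eqVneq v p.
  rewrite (negbTE pq) /= addn0 -(cards1 q); apply: eq_card => w.
  by rewrite !inE /edge eqxx (negbTE pq) /= orbF.
case: (eqVneq v q) vp => [-> qp|vq vp]; rewrite /= add0n.
  rewrite -(cards1 p); apply: eq_card => w.
  by rewrite !inE /edge eqxx (negbTE qp).
rewrite -(cards0 T); apply: eq_card => w.
by rewrite !inE /edge (negbTE vp) (negbTE vq).
Qed.

Lemma deg_relU_disjoint f g v : (forall w, f v w -> ~~ g v w) ->
  deg (fun a b => f a b || g a b) v = deg f v + deg g v.
Proof.
move=> fg; rewrite /deg -cardsUI.
have -> : [set w | f v w] :&: [set w | g v w] = set0.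
  by apply/setP => w; rewrite !inE; apply/negP => /andP[/fg/negPf->].
by rewrite cards0 addn0; apply: eq_card => w; rewrite !inE.
Qed.

Lemma deg_add_edge p q f v : symmetric f -> p != q -> ~~ f p q ->
  deg (add_edge p q f) v = deg f v + ((v == p) + (v == q)).
Proof.
move=> fsym pq fpq; rewrite -deg_edge //; apply: deg_relU_disjoint => w fvw.
by apply: contra fpq => /orP[] /andP[/eqP vp /eqP wq]; move: fvw; rewrite vp wq // fsym.
Qed.

Lemma deg_del_edge p q f v : symmetric f -> p != q -> f p q ->
  deg (del_edge p q f) v + ((v == p) + (v == q)) = deg f v.
Proof.
move=> fsym pq fpq; rewrite -deg_edge // -deg_relU_disjoint => [|w]; last first.
  by rewrite /del_edge => /andP[].
apply: eq_card => w; rewrite !inE /del_edge.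
by case: (boolP (edge p q v w)) => [/(edge_subrel fsym fpq)->|]; rewrite ?andbT ?orbF ?orbT.
Qed.

Lemma connect_del_edge g p q f : symmetric g -> connect g p q ->
  subrel (del_edge p q f) (connect g) -> subrel f (connect g).
Proof.
move=> gsym gpq sub u v fuv; have [|nuv] := boolP (edge p q u v); last first.
  by apply: sub; rewrite /del_edge fuv.
by case/orP=> /andP[/eqP-> /eqP->] //; rewrite sym_connect_sym.
Qed.

Lemma ncomp_connect_le (D : {set T}) f g : symmetric g -> subrel f (connect g) ->
  (forall u, exists2 v, v \in D & connect g u v) ->
  ncomp [set: T] g <= ncomp D f.
Proof.
move=> gsym fg toD; rewrite /ncomp.
set Cg := fun v => [set y in [set: T] | connect (restr [set: T] g) v y].
set Cf := fun v => [set y in D | connect (restr D f) v y].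
have CgE v y : connect g v y -> Cg v = Cg y.
  have restrT : restr [set: T] g =2 g by move=> a b; rewrite /restr !inE.
  move=> gvy; apply/setP => w; rewrite !inE !(eq_connect restrT) /=.
  exact: (same_connect (sym_connect_sym gsym) gvy w).
pose h (C : {set T}) := if [pick y in C] is Some y then Cg y else set0.
have hCf : {in D, h \o Cf =1 Cg}.
  move=> v vD; rewrite /h /=; case: pickP => [y|/(_ v)]; rewrite !inE ?vD ?connect0 //.
  case/andP=> _ fvy; apply/esym/CgE/(connect_sub _ fvy) => a b /and3P[_ _].
  exact: fg.
have sub : [set Cg v | v in [set: T]] \subset [set Cg v | v in D].
  apply/subsetP => _ /imsetP[v _ ->]; have [u uD gvu] := toD v.
  by rewrite (CgE v u gvu) imset_f.
apply: leq_trans (subset_leq_card sub) _.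
by rewrite -(eq_in_imset hCf) imset_comp leq_imset_card.
Qed.

End EdgeSwitch.

Section Orientation.
Variable T : finType.
Implicit Types (D : {set T}) (f : rel T) (s : T -> T).

(* [s] is the successor map of an orientation of the cycles of the 2-regular
   graph [f] on [D]; [s (s a) != a] forbids running along an edge and back. *)
Definition orientation D f s : Prop :=
  [/\ injective s, {in D, forall a, f a (s a)}, {in D, forall a, s (s a) != a}
    & forall a, a \notin D -> s a = a].

Lemma deg2P f v : deg f v = 2 -> exists p q, [/\ p != q, f v p & f v q].
Proof.
move=> d2; have /cards2P[p [q [pq E]]] : #|[set w | f v w]| == 2 by apply/eqP.
have /setP/(_ p) := E; have /setP/(_ q) := E; rewrite !inE !eqxx orbT /=.
by exists p, q.
Qed.

Lemma deg2_nbrs f v p q w : deg f v = 2 -> f v p -> f v q -> p != q ->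
  f v w -> (w == p) || (w == q).
Proof.
move=> d2 fp fq pq fw.
have E : [set p; q] = [set y | f v y].
  by apply/eqP; rewrite eqEcard cards2 pq -/(deg f v) d2 subUset !sub1set !inE fp fq.
have : w \in [set y | f v y] by rewrite inE.
by rewrite -E !inE.
Qed.

Lemma orientation_cover D f s : symmetric f -> (forall u v, f u v -> u \in D) ->
  {in D, forall v, deg f v = 2} -> orientation D f s ->
  forall u v, f u v -> v = s u \/ u = s v.
Proof.
move=> fsym fD fdeg [sinj sf ss sid] u v fuv; have uD := fD u v fuv.
have /codomP[t ut] := injF_onto sinj u.
have tD : t \in D by apply: contraT => tD; move: uD; rewrite ut (sid t tD) (negbTE tD).
have fut : f u t by rewrite fsym ut sf.
have sut : s u != t by apply: contraNneq (ss t tD); rewrite -ut => ->.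
by case/orP: (deg2_nbrs (fdeg u uD) (sf u uD) fut sut fuv) => /eqP->; [left|right].
Qed.

(* The triangle a b c is a cycle of its own: run it as a -> b -> c -> a. *)
Lemma orientation_triangle D f s a b c : irreflexive f ->
  a \in D -> b \in D -> c \in D -> f a b -> f b c -> f c a ->
  orientation (D :\: [set a; b; c]) (restr (D :\: [set a; b; c]) f) s ->
  orientation D f (s \o tperm a c \o tperm a b).
Proof.
move=> firr aD bD cD fab fbc fca [sinj sf ss sid].
have neq u v : f u v -> u != v by apply: contraTneq => ->; rewrite firr.
have ab := neq a b fab; have bc := neq b c fbc; have ca := neq c a fca.
have fix_abc v : v \in [set a; b; c] -> s v = v by move=> v3; apply: sid; rewrite inE v3.
have [sa sb sc] : [/\ s a = a, s b = b & s c = c].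
  by split; apply: fix_abc; rewrite !inE eqxx ?orbT.
have rotE : [/\ (s \o tperm a c \o tperm a b) a = b, (s \o tperm a c \o tperm a b) b = c
               & (s \o tperm a c \o tperm a b) c = a].
  have ac : a != c by rewrite eq_sym.
  have cb : c != b by rewrite eq_sym.
  by split=> /=; rewrite ?tpermL ?tpermR ?(tpermD ab cb) ?(tpermD ac bc) ?tpermL ?tpermR.
have rotD v : v \notin [set a; b; c] -> (s \o tperm a c \o tperm a b) v = s v.
  by rewrite !inE => /norP[/norP[va vb] vc]; rewrite /= !tpermD // eq_sym.
have inD' v : v \in D -> v \notin [set a; b; c] -> v \in D :\: [set a; b; c].
  by move=> vD v3; rewrite inE v3 vD.
case: rotE => rota rotb rotc.
split=> [|v vD|v vD|v vD]; first exact: inj_comp (inj_comp sinj perm_inj) perm_inj.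
- have [|v3] := boolP (v \in [set a; b; c]).
    by rewrite !inE -orbA => /or3P[]/eqP->; rewrite ?rota ?rotb ?rotc.
  by rewrite rotD //; case/and3P: (sf v (inD' v vD v3)).
- have [|v3] := boolP (v \in [set a; b; c]).
    by rewrite !inE -orbA => /or3P[]/eqP->; rewrite ?rota ?rotb ?rotc ?rota.
  have vD' := inD' v vD v3; case/and3P: (sf v vD') => _ /setDP[_ sv3] _.
  by rewrite !rotD // ss.
have v3 : v \notin [set a; b; c].
  by apply: contra vD; rewrite !inE -orbA => /or3P[]/eqP->.
by rewrite rotD // sid // inE negb_and vD orbT.
Qed.

(* Reinserting a suppressed vertex: if the edge b c that replaced the path b a c
   is oriented b -> c, composing with the transposition (a b) reroutes that arc
   as b -> a -> c. *)
Lemma orientation_contract D f f' s a b c :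
  symmetric f -> irreflexive f -> (forall u v, f u v -> u \in D) ->
  a \in D -> f a b -> f a c -> subrel f' (fun u v => f u v || edge b c u v) ->
  orientation (D :\ a) f' s -> s b = c -> orientation D f (s \o tperm a b).
Proof.
move=> fsym firr fD aD fab fac f'f [sinj sf ss sid] sb.
have neq u v : f u v -> u != v by apply: contraTneq => ->; rewrite firr.
have ab := neq a b fab; have ac := neq a c fac.
have bD : b \in D :\ a by rewrite !inE eq_sym ab (fD b a) // fsym.
have sa : s a = a by apply: sid; rewrite !inE eqxx.
have cb : c != b by apply: contraNneq (ss b bD) => cb; rewrite sb cb sb cb.
have sE v : v != a -> v != b -> (s \o tperm a b) v = s v.
  by move=> va vb; rewrite /= tpermD // eq_sym.
have sv_a v : v != a -> s v != a by move=> va; rewrite -sa (inj_eq sinj).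
split=> [|v vD|v vD|v vD]; first exact: inj_comp sinj perm_inj.
- have [->|va] := eqVneq v a; first by rewrite /= tpermL sb.
  have [->|vb] := eqVneq v b; first by rewrite /= tpermR sa fsym.
  have vD' : v \in D :\ a by rewrite !inE va.
  rewrite sE //; case/orP: (f'f _ _ (sf v vD')) => // /orP[] /andP[/eqP vE /eqP svE].
    by rewrite vE eqxx in vb.
  by move: (ss b bD); rewrite sb -vE svE eqxx.
- have ca : c != a by rewrite eq_sym.
  have [->|va] := eqVneq v a.
    have -> : (s \o tperm a b) a = c by rewrite /= tpermL.
    by rewrite sE // sv_a.
  have [->|vb] := eqVneq v b; first by rewrite /= tpermR sa tpermL sb.
  rewrite (sE v) //; have [->|svb] := eqVneq (s v) b; first by rewrite /= tpermR sa eq_sym.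
  by rewrite sE ?sv_a // ss // !inE va.
have va : v != a by apply: contraNneq vD => ->.
have vb : v != b by apply: contraNneq vD => ->; case/setD1P: bD.
by rewrite sE // sid // !inE negb_and vD orbT.
Qed.

End Orientation.

Section Suppression.
Variables (T : finType) (D : {set T}) (f : rel T) (a b c : T).
Hypotheses (fsym : symmetric f) (firr : irreflexive f).
Hypotheses (fD : forall u v, f u v -> u \in D) (fdeg : {in D, forall v, deg f v = 2}).
Hypotheses (aD : a \in D) (fab : f a b) (fac : f a c) (bc : b != c).

Let ab : a != b. Proof. by apply: contraTneq fab => <-; rewrite firr. Qed.
Let ac : a != c. Proof. by apply: contraTneq fac => <-; rewrite firr. Qed.
Let bD : b \in D. Proof. by apply: (@fD _ a); rewrite fsym. Qed.
Let cD : c \in D. Proof. by apply: (@fD _ a); rewrite fsym. Qed.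

Lemma restr_triangle_deg : f b c ->
  {in D :\: [set a; b; c], forall v, deg (restr (D :\: [set a; b; c]) f) v = 2}.
Proof.
move=> fbc; have fba : f b a by rewrite fsym.
have fca : f c a by rewrite fsym.
have fcb : f c b by rewrite fsym.
have closed v w : f v w -> v \in [set a; b; c] -> w \in [set a; b; c].
  move=> fvw; rewrite !inE -orbA => /or3P[]/eqP vE; rewrite {v}vE in fvw.
  - by case/orP: (deg2_nbrs (fdeg aD) fab fac bc fvw) => ->; rewrite ?orbT.
  - by case/orP: (deg2_nbrs (fdeg bD) fba fbc ac fvw) => ->; rewrite ?orbT.
  - by case/orP: (deg2_nbrs (fdeg cD) fca fcb ab fvw) => ->; rewrite ?orbT.
move=> v vD'; have [vD v3] := setDP vD'.
rewrite -(fdeg vD); apply: eq_card => w; rewrite !inE /restr vD' /=.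
apply/andP/idP => [[] //|fvw]; split=> //.
rewrite inE (@fD w v) ?andbT; last by rewrite fsym.
by apply: contra v3; apply: closed; rewrite fsym.
Qed.

Definition suppress : rel T := add_edge b c (del_edge a c (del_edge a b f)).

Lemma suppress_subrel : subrel suppress (fun u v => f u v || edge b c u v).
Proof. by move=> u v /orP[/andP[/andP[fuv _] _]|buv] /=; rewrite ?fuv ?buv ?orbT. Qed.

Lemma suppress_sym : symmetric suppress.
Proof. exact/add_edge_sym/del_edge_sym/del_edge_sym. Qed.

Lemma suppress_irr : irreflexive suppress.
Proof.
move=> u; apply/negP => /suppress_subrel/orP[]; first by rewrite firr.
by case/orP=> /andP[/eqP-> /eqP E]; move: bc; rewrite E eqxx.
Qed.

Lemma suppress_support u v : suppress u v -> u \in D :\ a.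
Proof.
rewrite /suppress /add_edge /del_edge => /orP[/andP[/andP[fuv nab] nac]|buv].
  rewrite !inE (fD fuv) andbT; apply: contraNneq nab => ua.
  rewrite ua in fuv nac *; case/orP: (deg2_nbrs (fdeg aD) fab fac bc fuv) => /eqP vE.
    by rewrite vE /edge !eqxx.
  by move: nac; rewrite vE /edge !eqxx.
by move: buv; rewrite /edge => /orP[]/andP[/eqP-> _]; rewrite !inE ?bD ?cD andbT eq_sym.
Qed.

Lemma suppress_deg : ~~ f b c -> {in D :\ a, forall v, deg suppress v = 2}.
Proof.
move=> nfbc v /setD1P[va vD]; have cb : c != b by rewrite eq_sym.
have fac' : del_edge a b f a c by rewrite /del_edge fac /edge eqxx (negbTE cb) (negbTE ab).
have nfbc' : ~~ del_edge a c (del_edge a b f) b c by rewrite /del_edge (negbTE nfbc).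
rewrite deg_add_edge //; last exact/del_edge_sym/del_edge_sym.
rewrite -(fdeg vD) -(deg_del_edge v fsym ab fab).
by rewrite -(deg_del_edge v (del_edge_sym _ _ fsym) ac fac') (negbTE va) /=; ring.
Qed.

End Suppression.

Lemma orientation_exists (T : finType) (D : {set T}) (f : rel T) :
  symmetric f -> irreflexive f ->
  (forall u v, f u v -> u \in D) -> {in D, forall v, deg f v = 2} ->
  exists s, orientation D f s.
Proof.
have [n] := ubnP #|D|; elim: n => // n IH in D f * => ltDn fsym firr fD fdeg.
have [D0|[a aD]] := set_0Vmem D; first by exists id; split=> // v; rewrite D0 inE.
have [b [c [bc fab fac]]] := deg2P (fdeg a aD).
(* Either a lies on a triangle, a whole cycle of f, or a can be suppressed. *)
have [fbc|nfbc] := boolP (f b c).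
  set D' := D :\: [set a; b; c].
  have [s os] : exists s, orientation D' (restr D' f) s.
    apply: IH => [|u v|u|u v /and3P[] //|]; last exact: restr_triangle_deg.
    - rewrite -ltnS (leq_trans _ ltDn) // ltnS.
      apply/proper_card/properP; split; first exact: subsetDl.
      by exists a; rewrite // !inE eqxx.
    - by rewrite /restr fsym andbCA.
    - by rewrite /restr firr !andbF.
  exists (s \o tperm a c \o tperm a b); apply: orientation_triangle => //.
  - by rewrite (fD b a) // fsym.
  - by rewrite (fD c a) // fsym.
  - by rewrite fsym.
have f'sym := suppress_sym a b c fsym.
have f'D := suppress_support fsym firr fD fdeg aD fab fac bc.
have f'deg := suppress_deg fsym firr fdeg fab fac bc nfbc.
have [s os] : exists s, orientation (D :\ a) (suppress f a b c) s.
  apply: IH => //; last exact: suppress_irr.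
  by rewrite (cardsD1 a) aD in ltDn.
have fbc' : suppress f a b c b c by rewrite /suppress /add_edge /edge !eqxx orbT.
have [sb|sc] := orientation_cover f'sym f'D f'deg os fbc'.
  exists (s \o tperm a b).
  exact: orientation_contract fab fac (@suppress_subrel _ f a b c) os (esym sb).
exists (s \o tperm a c); apply: orientation_contract fac fab _ os (esym sc) => //.
by move=> u v /suppress_subrel; rewrite edgeC.
Qed.

Lemma inj_closed_preim (T : finType) (s : T -> T) (P : {pred T}) :
  injective s -> (forall w, w \in P -> s w \in P) -> forall w, s w \in P -> w \in P.
Proof.
move=> sinj sP w; have fwd u v : frel s u v -> u \in P -> v \in P.
  by move=> /eqP<-; apply: sP.
by rewrite -(fclosed1 (intro_closed (fconnect_sym sinj) fwd)).
Qed.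

Section CoAbsorbable.
Variables (T : finType) (e F' : rel T) (x : T) (s : T -> T).
Hypotheses (e_sym : symmetric e) (e_irr : irreflexive e).
Hypothesis F'_factor : two_factor_on e [set~ x] F'.
Hypothesis F'_fewer :
  forall F2, two_factor e F2 -> ncomp [set~ x] F' < ncomp [set: T] F2.
Hypothesis s_orient : orientation [set~ x] F' s.

Let F'_sym : symmetric F'. Proof. by case: F'_factor. Qed.
Let F'_e : subrel F' e. Proof. by case: F'_factor => _ F'e _ u v /F'e/and3P[]. Qed.
Let F'_x w : ~~ F' x w.
Proof. by case: F'_factor => _ F'e _; apply/negP => /F'e; rewrite !inE eqxx. Qed.
Let F'_deg v : deg F' v + (v == x) * 2 = 2.
Proof.
case: F'_factor => _ _ F'deg; have [->|vx] := eqVneq v x; last by rewrite F'deg ?inE.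
suff -> : deg F' x = 0 by [].
by apply/eqP; rewrite cards_eq0; apply/eqP/setP => w; rewrite !inE (negbTE (F'_x w)).
Qed.
Let s_inj : injective s. Proof. by case: s_orient. Qed.
Let s_F' v : v != x -> F' v (s v).
Proof. by case: s_orient => _ sF _ _ vx; apply: sF; rewrite !inE. Qed.
Let s_x : s x = x. Proof. by case: s_orient => _ _ _; apply; rewrite !inE eqxx. Qed.
Let s_2cycle v : v != x -> s (s v) != v.
Proof. by case: s_orient => _ _ ss _ vx; apply: ss; rewrite !inE. Qed.
Let s_cover u v : F' u v -> v = s u \/ u = s v.
Proof.
case: F'_factor => _ F'e F'deg.
by apply: (@orientation_cover _ [set~ x]) => // a b /F'e/and3P[].
Qed.
Let neq_e u v : e u v -> u != v. Proof. by apply: contraTneq => ->; rewrite e_irr. Qed.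
Let neq_x u v : F' u v -> u != x.
Proof. by apply: contraTneq => ->; rewrite (negbTE (F'_x v)). Qed.

Lemma no_coarsening F2 y : two_factor e F2 -> subrel F' (connect F2) -> F2 x y -> False.
Proof.
move=> F2f F'F2 F2xy; have [F2sym F2e _] := F2f.
suff: ncomp [set: T] F2 <= ncomp [set~ x] F' by rewrite leqNgt F'_fewer.
apply: ncomp_connect_le => // u; have [->|ux] := eqVneq u x.
  exists y; last exact: connect1.
  by case/and3P: (F2e x y F2xy) => _ _ /neq_e; rewrite !inE eq_sym.
by exists u; rewrite ?inE.
Qed.

Section Insertion.
Variable y : T.
Hypotheses (exy : e x y) (exsy : e x (s y)).

Definition insert_at : rel T := add_edge x (s y) (add_edge x y (del_edge y (s y) F')).

Let yx : y != x. Proof. by rewrite eq_sym neq_e. Qed.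
Let F'ysy : F' y (s y). Proof. exact: s_F'. Qed.
Let y_sy : y != s y. Proof. exact/neq_e/F'_e. Qed.
Let sy_x : s y != x. Proof. by apply: (@neq_x _ y); rewrite F'_sym. Qed.
Let insert_sym : symmetric insert_at.
Proof. exact/add_edge_sym/add_edge_sym/del_edge_sym. Qed.

Lemma insert_two_factor : two_factor e insert_at.
Proof.
split=> // [u v|v _].
  move=> insuv; rewrite !inE; move: u v insuv.
  by do 2!apply: add_edge_subrel => //; move=> u v /del_edge_subrel/F'_e.
have Fsym := del_edge_sym y (s y) F'_sym.
have nxsy : ~~ add_edge x y (del_edge y (s y) F') x (s y).
  by apply: add_edgeN; [exact: del_edgeN | apply: edgeNr; rewrite // eq_sym].
rewrite (deg_add_edge v (add_edge_sym x y Fsym) _ nxsy); last by rewrite eq_sym.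
rewrite (deg_add_edge v Fsym _ (del_edgeN _ _ (F'_x y))); last by rewrite eq_sym.
by rewrite -[RHS](F'_deg v) -(deg_del_edge v F'_sym y_sy F'ysy); ring.
Qed.

Lemma insert_coarsening : subrel F' (connect insert_at).
Proof.
apply: (connect_del_edge insert_sym (_ : connect insert_at y (s y))) => [|u v yuv].
  by apply: (connect_trans (y := x)); apply: connect1;
    rewrite /insert_at /add_edge /edge !eqxx ?orbT.
by apply/connect1/add_edge_supset/add_edge_supset.
Qed.

End Insertion.

Lemma nbr_succ_nonadj y : e x y -> ~~ e x (s y).
Proof.
move=> exy; apply/negP => exsy.
apply: (no_coarsening (y := y) (insert_two_factor exy exsy) (@insert_coarsening y)).
by rewrite /insert_at /add_edge /edge !eqxx orbT.
Qed.

Section Splice.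
Variables a b : T.
Hypotheses (exa : e x a) (exb : e x b) (ab : a != b) (esasb : e (s a) (s b)).

Definition splice : rel T := add_edge (s a) (s b)
  (add_edge x b (add_edge x a (del_edge b (s b) (del_edge a (s a) F')))).

Let ax : a != x. Proof. by rewrite eq_sym neq_e. Qed.
Let bx : b != x. Proof. by rewrite eq_sym neq_e. Qed.
Let F'asa : F' a (s a). Proof. exact: s_F'. Qed.
Let F'bsb : F' b (s b). Proof. exact: s_F'. Qed.
Let sa_x : s a != x. Proof. by apply: (@neq_x _ a); rewrite F'_sym. Qed.
Let a_sa : a != s a. Proof. exact/neq_e/F'_e. Qed.
Let b_sb : b != s b. Proof. exact/neq_e/F'_e. Qed.
Let sa_b : s a != b.
Proof. by apply: contraNneq (nbr_succ_nonadj exa) => ->. Qed.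
Let sb_a : s b != a.
Proof. by apply: contraNneq (nbr_succ_nonadj exb) => ->. Qed.
Let sa_sb : s a != s b. Proof. by rewrite (inj_eq s_inj). Qed.
Let nF'sasb : ~~ F' (s a) (s b).
Proof.
by apply/negP => /s_cover[/s_inj E | /s_inj E]; [move: sa_b | move: sb_a]; rewrite E eqxx.
Qed.
Let splice_sym : symmetric splice.
Proof. exact/add_edge_sym/add_edge_sym/add_edge_sym/del_edge_sym/del_edge_sym. Qed.
Let splice_supset : subrel (del_edge b (s b) (del_edge a (s a) F')) splice.
Proof. by move=> u v F1uv; do 3!apply: add_edge_supset. Qed.
Let splice_xa : splice x a. Proof. by rewrite /splice /add_edge /edge !eqxx !orbT. Qed.
Let splice_xb : splice x b. Proof. by rewrite /splice /add_edge /edge !eqxx !orbT. Qed.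
Let splice_sasb : splice (s a) (s b).
Proof. by rewrite /splice /add_edge /edge !eqxx !orbT. Qed.

Lemma splice_two_factor : two_factor e splice.
Proof.
split=> // [u v|v _].
  move=> spuv; rewrite !inE; move: u v spuv.
  do 3!apply: add_edge_subrel => //.
  by move=> u v /del_edge_subrel/del_edge_subrel/F'_e.
set F1 := del_edge b (s b) (del_edge a (s a) F').
have F1sym : symmetric F1 by apply/del_edge_sym/del_edge_sym.
have F'bsb' : del_edge a (s a) F' b (s b) by rewrite /del_edge F'bsb edgeNl // eq_sym.
have nxb : ~~ add_edge x a F1 x b.
  by apply: add_edgeN; [do 2!apply: del_edgeN | apply: edgeNr; rewrite // eq_sym].
have nsasb : ~~ add_edge x b (add_edge x a F1) (s a) (s b).
  apply: add_edgeN; last exact: edgeNl.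
  apply: add_edgeN; last by apply: edgeNl; rewrite // eq_sym.
  by do 2!apply: del_edgeN.
rewrite (deg_add_edge v (add_edge_sym x b (add_edge_sym x a F1sym)) sa_sb nsasb).
rewrite (deg_add_edge v (add_edge_sym x a F1sym) _ nxb); last by rewrite eq_sym.
have nxa : ~~ F1 x a by do 2!apply: del_edgeN.
rewrite (deg_add_edge v F1sym _ nxa); last by rewrite eq_sym.
rewrite -[RHS](F'_deg v) -(deg_del_edge v F'_sym a_sa F'asa).
by rewrite -(deg_del_edge v (del_edge_sym a (s a) F'_sym) b_sb F'bsb'); ring.
Qed.

(* The vertices not joined to x in the splice are closed under s, since the
   only arcs w -> s w it drops start at a or b; by injectivity they are also
   closed under the inverse of s, so s a is joined to x because a is. *)
Lemma splice_connect_succ : connect splice x (s a).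
Proof.
apply: contraLR (connect1 splice_xa) => nxsa.
apply: (inj_closed_preim (P := [pred w | ~~ connect splice x w]) s_inj _ nxsa) => w.
rewrite !inE => nxw; have wx : w != x by apply: contraNneq nxw => ->; exact: connect0.
apply: contra nxw => xsw; have [spw|] := boolP (splice w (s w)).
  by apply: connect_trans xsw (connect1 _); rewrite splice_sym.
move/(contra (@splice_supset w (s w))); rewrite /del_edge (s_F' wx) /= negb_and !negbK.
case/orP=> /orP[]/andP[/eqP-> /eqP sw];
  rewrite ?(connect1 splice_xa) ?(connect1 splice_xb) //.
  by move: (s_2cycle ax); rewrite sw eqxx.
by move: (s_2cycle bx); rewrite sw eqxx.
Qed.

Lemma splice_coarsening : subrel F' (connect splice).
Proof.
have spc := sym_connect_sym splice_sym.
have xsb := connect_trans splice_connect_succ (connect1 splice_sasb).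
have a_sa' : connect splice a (s a).
  by apply: connect_trans splice_connect_succ; rewrite spc connect1.
have b_sb' : connect splice b (s b) by apply: connect_trans xsb; rewrite spc connect1.
apply: (connect_del_edge splice_sym a_sa'); apply: (connect_del_edge splice_sym b_sb').
by move=> u v /splice_supset/connect1.
Qed.

End Splice.

Lemma succ_nbrs_nonadj a b : e x a -> e x b -> a != b -> ~~ e (s a) (s b).
Proof.
move=> exa exb ab; apply/negP => esasb.
apply: (no_coarsening (y := a) (splice_two_factor exa exb ab esasb)).
  exact: splice_coarsening.
by rewrite /splice /add_edge /edge !eqxx !orbT.
Qed.

Lemma succ_nbrs_independent : independent e (x |: (s @: [set y | e x y])).
Proof.
apply/forallP => u; apply/implyP => Su; apply/forallP => v; apply/implyP => Sv.
case/setU1P: Su => [->|/imsetP[a]]; case/setU1P: Sv => [->|/imsetP[b]].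
- by rewrite e_irr.
- by rewrite inE => exb ->; apply: nbr_succ_nonadj.
- by rewrite inE => exa ->; rewrite e_sym; apply: nbr_succ_nonadj.
rewrite !inE => exb -> exa ->; have [->|ab] := eqVneq a b; first by rewrite e_irr.
exact: succ_nbrs_nonadj.
Qed.

Lemma card_succ_nbrs : #|x |: (s @: [set y | e x y])| = (deg e x).+1.
Proof.
rewrite cardsU1 card_imset //; suff -> : x \notin s @: [set y | e x y] by [].
apply/imsetP => -[y]; rewrite inE => exy /(etrans s_x)/s_inj xy.
by rewrite xy e_irr in exy.
Qed.

End CoAbsorbable.

Theorem lemma11 (T : finType) (e : rel T) (F : rel T) (x : T) :
  simple_graph e ->
  two_factor e F ->
  (forall F2 : rel T, two_factor e F2 -> ncomp [set: T] F <= ncomp [set: T] F2) ->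
  (exists F' : rel T, two_factor_on e [set~ x] F' /\
      ncomp [set~ x] F' < ncomp [set: T] F) ->
  deg e x <= alpha e - 1.
Proof.
move=> [e_sym e_irr] _ F_min [F' [F'_factor lt_F'_F]].
have F'_fewer F2 : two_factor e F2 -> ncomp [set~ x] F' < ncomp [set: T] F2.
  by move/F_min; apply: leq_trans lt_F'_F.
have [s s_orient] : exists s, orientation [set~ x] F' s.
  case: F'_factor => F'_sym F'_e F'_deg.
  apply: orientation_exists => // [u|u v /F'_e/and3P[] //].
  by apply/negP => /F'_e/and3P[_ _]; rewrite e_irr.
have := @leq_bigmax_cond _ (independent e) (fun S => #|S|) _
  (succ_nbrs_independent e_sym e_irr F'_factor F'_fewer s_orient).
rewrite (card_succ_nbrs e_irr s_orient) -/(alpha e) => lt_deg_alpha.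
by rewrite subn1 -ltnS (ltn_predK lt_deg_alpha).
Qed.
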